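(* Suppose the GAPs lie in $\mathbf{Q}^+$. Then in the Com-IC model, for any fixed seed sets $S_\mathcal{A},S_\mathcal{B}$, $\sigma_\mathcal{A}(S_\mathcal{A},S_\mathcal{B})$ is monotonically non-decreasing in each of $q_{\mathcal{A}|\emptyset},q_{\mathcal{A}|\mathcal{B}},q_{\mathcal{B}|\emptyset},q_{\mathcal{B}|\mathcal{A}}$ when the other three GAPs are held fixed, as long as the modified GAP vector still lies in $\mathbf{Q}^+$.
   Context: Com-IC model. Let $G=(V,E,p)$ be a directed graph with $p:E\to[0,1]$ and $N^-(v)$ the in-neighbours of $v$. Two items $\mathcal{A},\mathcal{B}$; GAPs $\mathbf{Q}=(q_{\mathcal{A}|\emptyset},q_{\mathcal{A}|\mathcal{B}},q_{\mathcal{B}|\emptyset},q_{\mathcal{B}|\mathcal{A}})\in[0,1]^4$. Given seed sets $S_\mathcal{A},S_\mathcal{B}\subseteq V$, randomness: each edge $(u,v)$ independently live w.p. $p(u,v)$; each node $v$ independently draws $\alpha^v_\mathcal{A},\alpha^v_\mathcal{B}$ uniform on $[0,1]$, a uniformly random permutation $\pi_v$ of $N^-(v)$, and a fair coin $\tau_v\in\{\mathcal{A},\mathcal{B}\}$. For each item $X$ each node is $X$-idle, $X$-suspended, $X$-adopted or $X$-rejected; initially all idle. At step $0$ nodes of $S_\mathcal{A}$ become $\mathcal{A}$-adopted and nodes of $S_\mathcal{B}$ become $\mathcal{B}$-adopted (order for nodes in both given by $\tau_v$). At step $t\ge1$, $v$ is informed of $X$ by in-neighbour $u$ if $(u,v)$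 is live and $u$ adopted $X$ at step $t-1$; informing in-neighbours are processed in order $\pi_v$ (an in-neighbour that adopted both items is processed for both, in its adoption order). When $v$ is informed of $X$ ($Y$ the other item) while $X$-idle: if $Y$-adopted, $v$ becomes $X$-adopted if $\alpha^v_X\le q_{X|Y}$, else $X$-rejected; otherwise $X$-adopted if $\alpha^v_X\le q_{X|\emptyset}$, else $X$-suspended. Informing a non-$X$-idle node of $X$ has no effect. Reconsideration: when an $X$-suspended node becomes $Y$-adopted, it becomes $X$-adopted if $\alpha^v_X\le q_{X|Y}$, else $X$-rejected. The process stops when nothing changes. $\sigma_\mathcal{A}(S_\mathcal{A},S_\mathcal{B})$ is the expected final number of $\mathcal{A}$-adopted nodes. $\mathbf{Q}^+$: $q_{\mathcal{A}|\emptyset}\le q_{\mathcal{A}|\mathcal{B}}$ and $q_{\mathcal{B}|\emptyset}\le q_{\mathcal{B}|\mathcal{A}}$. *)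

From HB Require Import structures.
From mathcomp Require Import all_boot all_order all_algebra all_fingroup.
Set Implicit Arguments. Unset Strict Implicit. Unset Printing Implicit Defensive.
Import Order.TTheory GRing.Theory Num.Theory.
Local Open Scope ring_scope.

(* Items are booleans: true = item A, false = item B; ~~ X is the other item. *)
Definition itemA : bool := true.
Definition itemB : bool := false.

(* Per-item state of a node; [Adopt t] = adopted at step t. *)
Inductive status := Idle | Susp | Adopt of nat | Rej.

Definition is_adopted (s : status) : bool := if s is Adopt _ then true else false.
Definition adopted_at (t : nat) (s : status) : bool :=
  if s is Adopt t' then t' == t else false.

(* GAP vector: [Q X false] = q_{X|emptyset}, [Q X true] = q_{X|other item}. *)
Definition GAP (R : realFieldType) := bool -> bool -> R.

Definition GAP_in01 (R : realFieldType) (Q : GAP R) : Prop :=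
  forall X c, 0 <= Q X c <= 1.

Definition Qplus (R : realFieldType) (Q : GAP R) : Prop :=
  Q itemA false <= Q itemA true /\ Q itemB false <= Q itemB true.

(* Node-local state: per-item status and the sequence of items in adoption order. *)
Record nstate := NState { nst : bool -> status; nord : seq bool }.

Definition upd (f : bool -> status) (X : bool) (s : status) : bool -> status :=
  fun Y => if Y == X then s else f Y.

Section ComIC.
Variables (R : realFieldType) (V : finType).

(* The uniform variable alpha^v_X only matters through the two events
   alpha <= q_{X|0} and alpha <= q_{X|Y}.  We record which of the three intervals
   [0,min], (min,max], (max,1] of the thresholds it falls in ("region"). *)
Definition alpha_le (Q : GAP R) (X c : bool) (r : 'I_3) : bool :=
  (val r == 0%N) ||
  ((val r == 1%N) && (if c then Q X false < Q X true else Q X true < Q X false)).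

Definition region_w (Q : GAP R) (X : bool) (r : 'I_3) : R :=
  let a := Q X false in let b := Q X true in
  if val r == 0%N then Num.min a b
  else if val r == 1%N then `|a - b|
  else 1 - Num.max a b.

Definition adopt (Q : GAP R) (rg : bool -> 'I_3) (t : nat) (ns : nstate) (X : bool)
  : nstate :=
  let f := upd (nst ns) X (Adopt t) in
  let o := rcons (nord ns) X in
  if f (~~ X) is Susp then
    if alpha_le Q (~~ X) true (rg (~~ X))
    then NState (upd f (~~ X) (Adopt t)) (rcons o (~~ X))
    else NState (upd f (~~ X) Rej) o
  else NState f o.

Definition inform (Q : GAP R) (rg : bool -> 'I_3) (t : nat) (ns : nstate) (X : bool)
  : nstate :=
  match nst ns X with
  | Idle =>
      if is_adopted (nst ns (~~ X)) then
        (if alpha_le Q X true (rg X) then adopt Q rg t ns X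
         else NState (upd (nst ns) X Rej) (nord ns))
      else
        (if alpha_le Q X false (rg X) then adopt Q rg t ns X
         else NState (upd (nst ns) X Susp) (nord ns))
  | _ => ns
  end.

(* Step 0: seeds; tau v = true means A is adopted first. *)
Definition init (SA SB : {set V}) (tau : V -> bool) : V -> nstate := fun v =>
  let inA := v \in SA in let inB := v \in SB in
  NState (fun X => if (if X then inA else inB) then Adopt 0 else Idle)
         (if inA && inB then (if tau v then [:: true; false] else [:: false; true])
          else if inA then [:: true] else if inB then [:: false] else [::]).

(* Step t >= 1.  In-neighbours are processed in the order given by the random
   permutation pi v of V (restricted to the live in-neighbours); an in-neighbour
   that adopted both items at t-1 is processed for both, in its adoption order. *)
Definition step (E : rel V) (live : V * V -> bool) (pi : V -> {perm V})
  (Q : GAP R) (rgn : V -> bool -> 'I_3) (t : nat) (g : V -> nstate) : V -> nstate :=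
  fun v =>
  let informers := [seq u <- map (pi v) (enum V) | E u v && live (u, v)] in
  let events := flatten [seq [seq X <- nord (g u) | adopted_at t.-1 (nst (g u) X)]
                        | u <- informers] in
  foldl (inform Q (rgn v) t) (g v) events.

Fixpoint run E live pi Q rgn (n : nat) (g : V -> nstate) : V -> nstate :=
  match n with
  | 0 => g
  | n'.+1 => step E live pi Q rgn n'.+1 (run E live pi Q rgn n' g)
  end.

(* Sample space: live-edge indicators, alpha regions, permutations, coins. *)
Definition omega : finType :=
  ({ffun V * V -> bool} * {ffun V * bool -> 'I_3} * {ffun V -> {perm V}}
   * {ffun V -> bool})%type.

(* Final state: no change can occur after 2|V|+2 steps (each of the at most
   2|V| adoptions needs an adoption at the previous step), so this is the
   state at which the process stops. *)
Definition final (E : rel V) (Q : GAP R) (SA SB : {set V}) (w : omega)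
  : V -> nstate :=
  let: (L, Rg, Pi, Tau) := w in
  run E (fun e => L e) (fun v => Pi v) Q (fun v X => Rg (v, X))
      (2 * #|V|).+2 (init SA SB (fun v => Tau v)).

Definition weight (E : rel V) (p : V -> V -> R) (Q : GAP R) (w : omega) : R :=
  let: (L, Rg, Pi, Tau) := w in
  (\prod_(e : V * V)
     (if E e.1 e.2 then (if L e then p e.1 e.2 else 1 - p e.1 e.2)
      else (if L e then 0 else 1)))
  * (\prod_(x : V * bool) region_w Q x.2 (Rg x))
  * (\prod_(v : V) ((#|V|`!)%:R)^-1)
  * (\prod_(v : V) 2^-1).

Definition sigmaA (E : rel V) (p : V -> V -> R) (Q : GAP R) (SA SB : {set V}) : R :=
  \sum_(w : omega)
    weight E p Q w * (#|[set v | is_adopted (nst (final E Q SA SB w v) itemA)]|)%:R.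

End ComIC.

From HB Require Import structures.
From mathcomp Require Import all_boot all_order all_algebra all_fingroup.
From mathcomp Require Import zify ring lra.
From Stdlib Require Import FunctionalExtensionality.
Set Implicit Arguments. Unset Strict Implicit. Unset Printing Implicit Defensive.
Import Order.TTheory GRing.Theory Num.Theory.
Local Open Scope ring_scope.

(* Under Q+ an alpha below q_{X|0} is also below q_{X|Y}, so the order in
   which a node hears about the items stops mattering: the final sets of
   A- and B-adopters are the least pair of sets closed under the rule "v adopts
   X if it is an X-seed, or a live in-neighbour adopted X and either
   alpha^v_X <= q_{X|0}, or v adopted the other item and alpha^v_X <= q_{X|Y}".
   This least fixed point depends on the permutations and coins not at all and
   on the alphas only through the indicators [alpha <= q], monotonically.
   Raising one GAP while staying in Q+ can therefore only increase the mean
   of the (monotone) number of A-adopters, coordinate by coordinate. *)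

Lemma neq_negb (X Y : bool) : X != Y -> X = ~~ Y.
Proof. by case: X; case: Y. Qed.

Lemma foldl_ind (S : Type) (T : eqType) (f : S -> T -> S) (P : S -> Prop) s xs :
  P s -> (forall s' x, x \in xs -> P s' -> P (f s' x)) -> P (foldl f s xs).
Proof.
elim: xs s => [|x xs IH] s Ps Pf //=; apply: IH => [|s' y y_xs]; apply: Pf => //.
- exact: mem_head.
- by rewrite in_cons y_xs orbT.
Qed.

Lemma alpha_le_alone (R : realFieldType) (Q : GAP R) X r :
  Q X false <= Q X true -> alpha_le Q X false r = (val r == 0%N).
Proof. by move=> le; rewrite /alpha_le /= ltNge le andbF orbF. Qed.

Section Inform.
Variables (R : realFieldType) (Q : GAP R) (rg : bool -> 'I_3) (t : nat).

Definition accept_alone Z := alpha_le Q Z false (rg Z).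
Definition accept_paired Z := alpha_le Q Z true (rg Z).
Definition accept_now (s : nstate) Y := alpha_le Q Y (is_adopted (nst s (~~ Y))) (rg Y).

Lemma nst_inform s Y Z :
  nst (inform Q rg t s Y) Z =
  if nst s Y is Idle then
    if Z == Y then
      if accept_now s Y then Adopt t
      else if is_adopted (nst s (~~ Y)) then Rej else Susp
    else if accept_now s Y && (if nst s (~~ Y) is Susp then true else false) then
      if accept_paired (~~ Y) then Adopt t else Rej
    else nst s Z
  else nst s Z.
Proof.
case: s => f o; rewrite /inform /adopt /upd /accept_now /accept_paired /=.
case: Y Z => -[] /=; case Et: (f true) => [| |?|]; case Ef: (f false) => [| |?|] //=;
  by repeat (case: ifP => //=; rewrite ?Et ?Ef //=).
Qed.

Definition consistent (s : nstate) : Prop :=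
  [/\ forall Z, is_adopted (nst s Z) -> Z \in nord s,
      forall Z, nst s Z = Rej -> ~~ accept_paired Z &
      forall Z, nst s Z = Susp -> ~~ accept_alone Z && ~~ is_adopted (nst s (~~ Z))].

Lemma consistent_inform s Y : consistent s -> consistent (inform Q rg t s Y).
Proof.
case: s => f o.
rewrite (_ : f = fun Z : bool => if Z then f true else f false); last first.
  by apply: functional_extensionality => -[].
move: (f true) (f false) => x y.
rewrite /consistent /accept_alone /accept_paired => -[in_ord rej susp].
move: (in_ord true) (in_ord false) (rej true) (rej false) (susp true) (susp false) => /=.
clear in_ord rej susp.
rewrite /inform /adopt /upd /=.
case: Y; case: x => [| |?|]; case: y => [| |?|]; rewrite /= => A1 A2 B1 B2 C1 C2;
split => -[]; move: A1 A2 B1 B2 C1 C2 => /=;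
case: (alpha_le Q true false (rg true)); case: (alpha_le Q true true (rg true));
case: (alpha_le Q false false (rg false)); case: (alpha_le Q false true (rg false));
rewrite /= => A1 A2 B1 B2 C1 C2 //; rewrite ?mem_rcons ?in_cons /=.
all: try (move=> _; rewrite ?A1 ?A2 ?orbT //).
all: try (move=> H; by move: (B1 H) (B2 H) (C1 H) (C2 H)).
all: by rewrite mem_rcons mem_head.
Qed.

Lemma accept_alone_paired Z : Q Z false <= Q Z true -> accept_alone Z -> accept_paired Z.
Proof.
by move=> le; rewrite /accept_alone alpha_le_alone // /accept_paired /alpha_le => ->.
Qed.

Lemma inform_keeps_adopt s Y X t' :
  nst s X = Adopt t' -> nst (inform Q rg t s Y) X = Adopt t'.
Proof.
move=> sX; rewrite nst_inform; case sY: (nst s Y) => //.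
have [eXY|/neq_negb eX] := eqVneq X Y; first by move: sY; rewrite -eXY sX.
by rewrite -eX sX andbF.
Qed.

Lemma inform_keeps_nonidle s Y X :
  nst s X <> Idle -> nst (inform Q rg t s Y) X <> Idle.
Proof.
move=> sX; rewrite nst_inform; case sY: (nst s Y) => //.
have [eXY|/neq_negb eX] := eqVneq X Y; first by move: sX; rewrite eXY sY.
by rewrite -eX; case: ifP => // _; case: ifP.
Qed.

Lemma inform_not_idle s Y : nst (inform Q rg t s Y) Y <> Idle.
Proof. by rewrite nst_inform eqxx; case: (nst s Y) => //; repeat case: ifP. Qed.

Lemma inform_adopt_time s Y X t' :
  nst (inform Q rg t s Y) X = Adopt t' -> nst s X = Adopt t' \/ t' = t.
Proof.
rewrite nst_inform; case: (nst s Y) => [| |?|]; try by left.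
case: (X == Y); first by repeat case: ifP => //; move=> *; right; congruence.
by case: ifP => [_|_]; [case: ifP => // _ [<-]; right | left].
Qed.

Definition supported (P : bool -> bool) (W : bool -> Prop) s :=
  forall Z, (is_adopted (nst s Z) -> P Z) /\ (nst s Z = Susp -> W Z).

Lemma supported_inform (P : bool -> bool) (W : bool -> Prop) s Y :
  (forall Z, W Z -> accept_alone Z || (P (~~ Z) && accept_paired Z) -> P Z) -> W Y ->
  supported P W s -> supported P W (inform Q rg t s Y).
Proof.
move=> closedP WY sup Z; rewrite nst_inform.
case sY: (nst s Y) => [| |?|]; try exact: sup.
have nowP : accept_now s Y -> P Y.
  rewrite /accept_now => acc; apply: closedP => //.
  case: (boolP (is_adopted _)) acc => [ad acc|_ acc]; last by rewrite /accept_alone acc.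
  by rewrite /accept_paired acc (proj1 (sup _) ad) orbT.
have [->|/neq_negb ->] := eqVneq Z Y.
  split; first by case: ifP => [acc _|_]; [exact: nowP | case: ifP].
  by case: ifP => // _; case: ifP.
case: ifP => [/andP[acc susp]|_]; last exact: sup.
case sY': (nst s (~~ Y)) susp => // _.
split=> //; case: ifP => // acc' _; apply: closedP; first exact: (proj2 (sup _) sY').
by rewrite negbK nowP // acc' orbT.
Qed.
End Inform.

Section AdoptionFixpoint.
Variables (V : finType) (edge : rel V) (la lb : V -> bool -> bool) (SA SB : {set V}).

Definition sel X (A B : {set V}) := if X then A else B.

Definition adoption_rule (AB : {set V} * {set V}) v X :=
  (v \in sel X SA SB) ||
  [exists u, edge u v && (u \in sel X AB.1 AB.2)] &&
  (la v X || (v \in sel (~~ X) AB.1 AB.2) && lb v X).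

Definition prefixed AB :=
  [forall v, forall X, adoption_rule AB v X ==> (v \in sel X AB.1 AB.2)].

Definition lfp_adopt X := [set v | [forall AB, prefixed AB ==> (v \in sel X AB.1 AB.2)]].

Lemma prefixedP AB :
  reflect (forall v X, adoption_rule AB v X -> v \in sel X AB.1 AB.2) (prefixed AB).
Proof.
apply: (iffP forallP) => [pAB v X|pAB v]; first by move/forallP/(_ X)/implyP: (pAB v).
by apply/forallP => X; apply/implyP; apply: pAB.
Qed.

Lemma lfp_adoptE (F : bool -> {set V}) :
  prefixed (F true, F false) ->
  (forall AB, prefixed AB -> forall X, F X \subset sel X AB.1 AB.2) ->
  forall X, lfp_adopt X = F X.
Proof.
move=> pF Fleast X; apply/setP => v; rewrite inE; apply/forallP/idP.
  by move/(_ (F true, F false))/implyP/(_ pF); case: X.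
by move=> vF AB; apply/implyP => pAB; apply: (subsetP (Fleast AB pAB X)).
Qed.
End AdoptionFixpoint.

Lemma lfp_adopt_mono (V : finType) (edge : rel V) (la lb la' lb' : V -> bool -> bool) SA SB X :
  (forall v Y, la v Y -> la' v Y) -> (forall v Y, lb v Y -> lb' v Y) ->
  lfp_adopt edge la lb SA SB X \subset lfp_adopt edge la' lb' SA SB X.
Proof.
move=> le_a le_b; apply/subsetP => v; rewrite !inE => /forallP lfp_v.
apply/forallP => AB; apply/implyP => pAB; apply: (implyP (lfp_v AB)).
apply/prefixedP => w Y rule; apply: (prefixedP _ _ _ _ _ _ pAB).
move: rule; rewrite /adoption_rule.
by case/orP=> [->//|/andP[-> /orP[/le_a ->|/andP[-> /le_b ->]]]]; rewrite ?orbT.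
Qed.

Lemma eq_lfp_adopt (V : finType) (edge : rel V) (la lb la' lb' : V -> bool -> bool) SA SB X :
  (forall v Y, la v Y = la' v Y) -> (forall v Y, lb v Y = lb' v Y) ->
  lfp_adopt edge la lb SA SB X = lfp_adopt edge la' lb' SA SB X.
Proof.
by move=> ea eb; apply/eqP; rewrite eqEsubset !lfp_adopt_mono // => v Y; rewrite ?ea ?eb.
Qed.

Lemma foldl_inform_not_idle (R : realFieldType) (Q : GAP R) rg t evs s Y :
  Y \in evs -> nst (foldl (inform Q rg t) s evs) Y <> Idle.
Proof.
elim: evs s => [|Z evs IH] s //=; rewrite in_cons => /orP[/eqP->|/IH //].
apply: (foldl_ind (P := fun s => nst s Z <> Idle)); first exact: inform_not_idle.
by move=> s' Y' _; apply: inform_keeps_nonidle.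
Qed.

Lemma adopted_atE t s : adopted_at t s -> s = Adopt t.
Proof. by case: s => //= t' /eqP->. Qed.

Section Run.
Variables (R : realFieldType) (V : finType) (E : rel V) (live : V * V -> bool)
  (pi : V -> {perm V}) (Q : GAP R) (rgn : V -> bool -> 'I_3)
  (SA SB : {set V}) (tau : V -> bool).

Definition live_edge u v := E u v && live (u, v).
Definition alone v := accept_alone Q (rgn v).
Definition paired v := accept_paired Q (rgn v).
Definition state n := run E live pi Q rgn n (init SA SB tau).

Definition events (g : V -> nstate) t v :=
  flatten [seq [seq X <- nord (g u) | adopted_at t.-1 (nst (g u) X)]
          | u <- [seq u <- map (pi v) (enum V) | E u v && live (u, v)]].

Lemma stepE t g v :
  step E live pi Q rgn t g v = foldl (inform Q (rgn v) t) (g v) (events g t v).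
Proof. by []. Qed.

Lemma stateS n : state n.+1 = step E live pi Q rgn n.+1 (state n).
Proof. by []. Qed.

Lemma mem_events g t v X :
  X \in events g t v <->
  exists u, [/\ live_edge u v, X \in nord (g u) & adopted_at t.-1 (nst (g u) X)].
Proof.
split=> [|[u [uv Xu Xt]]].
  case/flattenP=> s /mapP[u]; rewrite mem_filter => /andP[uv _] -> {s}.
  by rewrite mem_filter => /andP[Xt Xu]; exists u.
apply/flattenP; exists [seq X <- nord (g u) | adopted_at t.-1 (nst (g u) X)].
  apply/mapP; exists u => //; rewrite mem_filter; apply/andP; split; first exact: uv.
  by apply/mapP; exists ((pi v)^-1 u)%g; rewrite ?mem_enum ?permKV.
by rewrite mem_filter Xt Xu.
Qed.

Lemma step_keeps_adopt g t v X t' :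
  nst (g v) X = Adopt t' -> nst (step E live pi Q rgn t g v) X = Adopt t'.
Proof.
move=> gX; rewrite stepE; apply: (foldl_ind (P := fun s => nst s X = Adopt t')) => //.
by move=> s Y _; apply: inform_keeps_adopt.
Qed.

Lemma step_keeps_nonidle g t v X :
  nst (g v) X <> Idle -> nst (step E live pi Q rgn t g v) X <> Idle.
Proof.
move=> gX; rewrite stepE; apply: (foldl_ind (P := fun s => nst s X <> Idle)) => //.
by move=> s Y _; apply: inform_keeps_nonidle.
Qed.

Lemma step_adopt_time g t v X t' :
  nst (step E live pi Q rgn t g v) X = Adopt t' ->
  nst (g v) X = Adopt t' \/ (t' = t /\ exists u Y, nst (g u) Y = Adopt t.-1).
Proof.
rewrite stepE; move: X t'.
apply: (foldl_ind (P := fun s => forall X t', nst s X = Adopt t' ->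
   nst (g v) X = Adopt t' \/ (t' = t /\ exists u Y, nst (g u) Y = Adopt t.-1))).
  by move=> X t' ->; left.
move=> s Y /mem_events[u [_ _ /adopted_atE uY]] IH X t' /inform_adopt_time[/IH //|->].
by right; split=> //; exists u, Y.
Qed.

Lemma state_adopt_time n v X t' :
  nst (state n v) X = Adopt t' ->
  (t' <= n)%N /\ ((0 < t')%N -> exists u Y, nst (state n u) Y = Adopt t'.-1).
Proof.
elim: n v X t' => [|n IH] v X t'; first by rewrite /state /= /init /=; case: ifP => // _ [<-].
rewrite stateS => /step_adopt_time[/IH[le prev]|[-> [u [Y uY]]]].
  split; first exact: leqW.
  by move=> /prev[u [Y uY]]; exists u, Y; apply: step_keeps_adopt.
by split=> // _; exists u, Y; apply: step_keeps_adopt.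
Qed.

Lemma state_adopt_mono k m v X t' :
  (k <= m)%N -> nst (state k v) X = Adopt t' -> nst (state m v) X = Adopt t'.
Proof.
move=> /subnK <-; elim: (m - k)%N => [//|d IH] kX.
by rewrite addSn stateS; apply: step_keeps_adopt; apply: IH.
Qed.

Lemma state_nonidle_mono k m v X :
  (k <= m)%N -> nst (state k v) X <> Idle -> nst (state m v) X <> Idle.
Proof.
move=> /subnK <-; elim: (m - k)%N => [//|d IH] kX.
by rewrite addSn stateS; apply: step_keeps_nonidle; apply: IH.
Qed.

Lemma state_adopt_early m k v X t' :
  (k <= m)%N -> (t' <= k)%N -> nst (state m v) X = Adopt t' -> nst (state k v) X = Adopt t'.
Proof.
elim: m k => [|m IH] k; first by rewrite leqn0 => /eqP->.
rewrite leq_eqVlt => /orP[/eqP->//|km] tk.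
rewrite stateS => /step_adopt_time[|[et _]]; first exact: IH.
by move: km; rewrite -et ltnNge tk.
Qed.

Lemma consistent_state n v : consistent Q (rgn v) (state n v).
Proof.
elim: n v => [|n IH] v.
  by rewrite /state /= /init /consistent /=; case: (v \in SA); case: (v \in SB);
    case: (tau v); split=> -[].
by rewrite stateS stepE; apply: foldl_ind => // s Y _; apply: consistent_inform.
Qed.

(* An adoption at time t0 forces adoptions at every earlier time, each by a
   distinct (node, item) pair. *)
Lemma state_adopt_time_lt n u X t0 :
  nst (state n u) X = Adopt t0 -> (t0 < 2 * #|V|)%N.
Proof.
move=> uX.
have back d : (d <= t0)%N -> exists p : V * bool, adopted_at (t0 - d) (nst (state n p.1) p.2).
  elim: d => [|d IH] hd; first by exists (u, X); rewrite subn0 uX /=.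
  have [p /adopted_atE pt] := IH (ltnW hd).
  have [w [Y wY]] : exists w Y, nst (state n w) Y = Adopt (t0 - d).-1.
    by apply: (proj2 (state_adopt_time pt)); rewrite subn_gt0.
  by exists (w, Y); rewrite /= wY /= subnS.
pose f (i : 'I_t0.+1) := odflt (u, X) [pick p | adopted_at i (nst (state n p.1) p.2)].
have fP (i : 'I_t0.+1) : adopted_at i (nst (state n (f i).1) (f i).2).
  rewrite /f; case: pickP => [p //|/= none].
  have := back (t0 - i)%N (leq_subr _ _); rewrite subKn; last by rewrite -ltnS ltn_ord.
  by case=> p; rewrite none.
have f_inj : injective f.
  move=> i j fij; have := fP i; rewrite fij; move: (fP j).
  by case: (nst _ _) => //= t /eqP-> /eqP /val_inj.
by have := leq_card f f_inj; rewrite card_ord card_prod card_bool mulnC.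
Qed.

Lemma state_below_prefixed AB n v : prefixed live_edge alone paired SA SB AB ->
  supported (fun Z => v \in sel Z AB.1 AB.2)
            (fun Z => exists u, live_edge u v /\ u \in sel Z AB.1 AB.2) (state n v).
Proof.
move=> /prefixedP pAB; elim: n v => [|n IH] v.
  move=> Z; rewrite /state /= /init /=; split; last by case: ifP.
  by case: ifP => // seed _; apply: pAB; rewrite /adoption_rule; case: Z seed => /= ->.
rewrite stateS stepE; apply: foldl_ind; first exact: IH.
move=> s Y /mem_events[u [uv _ /adopted_atE uY]] sup; apply: supported_inform sup.
  move=> Z [w [wv wZ]] acc; apply: pAB; rewrite /adoption_rule /alone /paired acc andbT.
  by apply/orP; right; apply/existsP; exists w; rewrite wv.
by exists u; split=> //; apply: (proj1 (IH u Y)); rewrite uY.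
Qed.

Definition horizon := (2 * #|V|).+2.
Definition final_adopters X := [set v | is_adopted (nst (state horizon v) X)].

Lemma final_adopters_prefixed : (forall Z, Q Z false <= Q Z true) ->
  prefixed live_edge alone paired SA SB (final_adopters true, final_adopters false).
Proof.
move=> Qplus_ge; apply/prefixedP => v X.
have selF Z : sel Z (final_adopters true) (final_adopters false) = final_adopters Z.
  by case: Z.
rewrite /adoption_rule /= !selF; case/orP => [seed|/andP[/existsP[u /andP[uv]] uF acc]].
  rewrite inE; have := @state_adopt_mono 0 horizon v X 0 (leq0n _).
  by rewrite /state /= /init; case: X seed => /= -> /(_ erefl) ->.
move: uF; rewrite inE; case uX: (nst _ _) => [| |t0|] //= _.
have t0_lt := state_adopt_time_lt uX.
have uX0 : nst (state t0 u) X = Adopt t0.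
  by apply: (state_adopt_early _ _ uX) => //; rewrite /horizon; lia.
have informed : nst (state t0.+1 v) X <> Idle.
  rewrite stateS stepE; apply: foldl_inform_not_idle; apply/mem_events; exists u.
  split=> //; last by rewrite uX0 /=.
  by case: (consistent_state t0 u) => in_ord _ _; apply: in_ord; rewrite uX0.
have := state_nonidle_mono (m := horizon) _ informed; rewrite /horizon => /(_ ltac:(lia)).
(* v heard of X; had it not adopted X it would be suspended (failing both
   tests) or rejected (failing the paired test, hence the alone one by Q+). *)
rewrite inE; case: (consistent_state horizon v) => _ rej susp.
case vX: (nst _ _) => [| |?|] //= _.
  move: (susp X vX) acc; rewrite inE /alone /paired.
  by case: (accept_alone _ _ X) => //=; case: (is_adopted _).
move: (rej X vX) acc => /negbTE not_paired.
rewrite /paired not_paired andbF orbF => /(accept_alone_paired (Qplus_ge X)).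
by rewrite not_paired.
Qed.

Lemma lfp_adopt_final X : (forall Z, Q Z false <= Q Z true) ->
  lfp_adopt live_edge alone paired SA SB X = final_adopters X.
Proof.
move=> Qplus_ge; apply: lfp_adoptE; first exact: final_adopters_prefixed.
move=> AB pAB Y; apply/subsetP => v; rewrite inE => ad.
exact: (proj1 (state_below_prefixed horizon v pAB Y) ad).
Qed.
End Run.

Definition interval_weight (R : realFieldType) (a b : R) (r : 'I_3) : R :=
  if val r == 0%N then Num.min a b
  else if val r == 1%N then `|a - b| else 1 - Num.max a b.

Lemma interval_weight_ge0 (R : realFieldType) (a b : R) r :
  0 <= a -> a <= b -> b <= 1 -> 0 <= interval_weight a b r.
Proof.
move=> a_ge0 ab b_le1; rewrite /interval_weight (min_idPl ab) (max_idPr ab).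
by case: ifP => // _; case: ifP; rewrite ?subr_ge0.
Qed.

Lemma sum_ord3 (T : nmodType) (g : 'I_3 -> T) :
  \sum_(r < 3) g r = g (inord 0) + g (inord 1) + g (inord 2).
Proof.
rewrite !big_ord_recl big_ord0 addr0 addrA.
by congr (g _ + g _ + g _); apply: val_inj; rewrite /= inordK.
Qed.

(* With r the position of a uniform alpha relative to a <= b, the sum below is
   the mean of G (alpha <= a) (alpha <= b); raising a moves mass from G false _
   to G true true, raising b moves mass from G false false to G false true. *)
Lemma mean3_mono (R : realFieldType) (G : bool -> bool -> R) (a b a' b' : R) :
  G false false <= G false true -> G false true <= G true true ->
  a <= b -> a' <= b' -> a <= a' -> b <= b' ->
  \sum_(r < 3) interval_weight a b r *
    G (val r == 0%N) ((val r == 0%N) || (val r == 1%N) && (a < b)) <=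
  \sum_(r < 3) interval_weight a' b' r *
    G (val r == 0%N) ((val r == 0%N) || (val r == 1%N) && (a' < b')).
Proof.
move=> G0 G1 ab ab' aa' bb'.
rewrite !sum_ord3 /interval_weight /= !inordK //= (min_idPl ab) (min_idPl ab').
rewrite (max_idPr ab) (max_idPr ab') !(distrC _ b) !(distrC _ b') !ger0_norm ?subr_ge0 //.
have k1 : 0 <= (a' - a) * (G true true - G false true) by apply: mulr_ge0; rewrite subr_ge0.
have k2 : 0 <= (b' - b) * (G false true - G false false) by apply: mulr_ge0; rewrite subr_ge0.
case: ltP => l1; case: ltP => l2; rewrite ?orbT ?orbF.
- nra.
- have e : a' = b' by apply/eqP; rewrite eq_le ab' l2.
  subst; nra.
- have e : a = b by apply/eqP; rewrite eq_le ab l1.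
  subst; nra.
- have e : a = b by apply/eqP; rewrite eq_le ab l1.
  have e' : a' = b' by apply/eqP; rewrite eq_le ab' l2.
  subst; nra.
Qed.

Section ThresholdMean.
Variables (R : realFieldType) (I : finType) (F : (I -> bool) -> (I -> bool) -> R).
Hypothesis F_mono : forall x y x' y' : I -> bool,
  (forall i, x i -> x' i) -> (forall i, y i -> y' i) -> F x y <= F x' y'.

Lemma F_ext (x y x' y' : I -> bool) : x =1 x' -> y =1 y' -> F x y = F x' y'.
Proof. by move=> ex ey; apply/eqP; rewrite eq_le !F_mono // => i; rewrite ?ex ?ey. Qed.

Definition below_lo (rg : {ffun I -> 'I_3}) i := val (rg i) == 0%N.
Definition below_hi (a b : I -> R) (rg : {ffun I -> 'I_3}) i :=
  (val (rg i) == 0%N) || (val (rg i) == 1%N) && (a i < b i).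

(* The mean of F at the indicators of (alpha_i <= a i) and (alpha_i <= b i) for
   independent uniform alpha_i, computed through the position rg i of alpha_i
   relative to a i <= b i. *)
Definition threshold_mean (a b : I -> R) :=
  \sum_(rg : {ffun I -> 'I_3})
    (\prod_i interval_weight (a i) (b i) (rg i)) * F (below_lo rg) (below_hi a b rg).

Definition ordered_thresholds (a b : I -> R) :=
  forall i, [/\ 0 <= a i, a i <= b i & b i <= 1].

Lemma eq_threshold_mean a b a' b' : a =1 a' -> b =1 b' ->
  threshold_mean a b = threshold_mean a' b'.
Proof.
move=> ea eb; apply: eq_bigr => rg _; congr (_ * _).
  by apply: eq_bigr => i _; rewrite ea eb.
by apply: F_ext => // i; rewrite /below_hi ea eb.
Qed.

Definition ffun_set (rg : {ffun I -> 'I_3}) i0 r : {ffun I -> 'I_3} :=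
  [ffun i => if i == i0 then r else rg i].

Lemma threshold_mean_fibers a b i0 :
  threshold_mean a b =
  \sum_(rg : {ffun I -> 'I_3} | val (rg i0) == 0%N) \sum_(r < 3)
     (\prod_i interval_weight (a i) (b i) (ffun_set rg i0 r i)) *
      F (below_lo (ffun_set rg i0 r)) (below_hi a b (ffun_set rg i0 r)).
Proof.
rewrite /threshold_mean (partition_big (fun rg : {ffun I -> 'I_3} => rg i0) xpredT) //=.
rewrite exchange_big /=; apply: eq_bigr => r _.
rewrite (reindex_onto (fun rg => ffun_set rg i0 r) (fun rg => ffun_set rg i0 ord0)) /=.
  apply: eq_bigl => rg; rewrite /ffun_set ffunE !eqxx /=.
  apply/eqP/eqP => [<-|rg0]; first by rewrite ffunE eqxx.
  by apply/ffunP => i; rewrite !ffunE; case: eqP => // ->; apply: val_inj.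
by move=> rg /eqP rgr; apply/ffunP => i; rewrite /ffun_set !ffunE; case: eqP => // ->.
Qed.

Lemma threshold_mean_mono1 a b a' b' i0 :
  ordered_thresholds a b -> ordered_thresholds a' b' ->
  (forall i, i != i0 -> a' i = a i /\ b' i = b i) -> a i0 <= a' i0 -> b i0 <= b' i0 ->
  threshold_mean a b <= threshold_mean a' b'.
Proof.
move=> ab ab' same aa' bb'.
rewrite (threshold_mean_fibers a b i0) (threshold_mean_fibers a' b' i0).
apply: ler_sum => rg _.
pose C := \prod_(i | i != i0) interval_weight (a i) (b i) (rg i).
pose G x y := F (fun i => if i == i0 then x else below_lo rg i)
                (fun i => if i == i0 then y else below_hi a b rg i).
have fiberE (c d : I -> R) : (forall i, i != i0 -> c i = a i /\ d i = b i) ->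
  \sum_(r < 3) (\prod_i interval_weight (c i) (d i) (ffun_set rg i0 r i)) *
     F (below_lo (ffun_set rg i0 r)) (below_hi c d (ffun_set rg i0 r)) =
  C * \sum_(r < 3) interval_weight (c i0) (d i0) r *
     G (val r == 0%N) ((val r == 0%N) || (val r == 1%N) && (c i0 < d i0)).
  move=> same_cd; rewrite mulr_sumr; apply: eq_bigr => r _.
  rewrite (bigD1 i0) //= /ffun_set ffunE eqxx mulrCA -mulrA; congr (_ * (_ * _)).
    by apply: eq_bigr => i /[dup] /same_cd[-> ->] /negPf ne; rewrite ffunE ne.
  apply: F_ext => i; rewrite /below_lo /below_hi ffunE;
    have [e|ne] := eqVneq i i0; rewrite ?e //.
  by case: (same_cd i ne) => -> ->.
rewrite !fiberE //; apply: ler_wpM2l.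
  by apply: prodr_ge0 => i _; case: (ab i) => *; apply: interval_weight_ge0.
have [a0 ab0 b1] := ab i0; have [_ ab0' _] := ab' i0.
by apply: mean3_mono => //; apply: F_mono => i //; case: ifP.
Qed.

Lemma threshold_mean_mono a b a' b' :
  ordered_thresholds a b -> ordered_thresholds a' b' ->
  (forall i, a i <= a' i) -> (forall i, b i <= b' i) ->
  threshold_mean a b <= threshold_mean a' b'.
Proof.
move=> ab ab' aa' bb'.
pose mix (s : seq I) (c c' : I -> R) i := if i \in s then c' i else c i.
have mix_ordered s : ordered_thresholds (mix s a a') (mix s b b').
  by move=> i; rewrite /mix; case: ifP.
suff mix_mono s : threshold_mean a b <= threshold_mean (mix s a a') (mix s b b').
  rewrite -(eq_threshold_mean (a := mix (enum I) a a') (b := mix (enum I) b b')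
    (a' := a') (b' := b')) ?mix_mono // => i; by rewrite /mix mem_enum.
elim: s => [|i s IH]; first by rewrite -(eq_threshold_mean (a := a) (b := b)).
apply: le_trans IH (threshold_mean_mono1 (i0 := i) _ _ _ _ _) => //.
- by move=> j /negPf ne; rewrite /mix in_cons ne.
- by rewrite /mix in_cons eqxx /=; case: ifP.
- by rewrite /mix in_cons eqxx /=; case: ifP.
Qed.
End ThresholdMean.

Section Expectation.
Variables (R : realFieldType) (V : finType) (E : rel V) (p : V -> V -> R) (SA SB : {set V}).

Definition edge_weight (L : {ffun V * V -> bool}) : R :=
  \prod_(e : V * V)
    (if E e.1 e.2 then (if L e then p e.1 e.2 else 1 - p e.1 e.2)
     else (if L e then 0 else 1)).

Definition choice_weight : R := (\prod_(v : V) ((#|V|`!)%:R)^-1) * (\prod_(v : V) 2^-1).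

Definition gap_lo (Q : GAP R) (i : V * bool) := Q i.2 false.
Definition gap_hi (Q : GAP R) (i : V * bool) := Q i.2 true.

Definition adopters_A (L : {ffun V * V -> bool}) (x y : V * bool -> bool) : R :=
  #|lfp_adopt (live_edge E (fun e => L e)) (fun v X => x (v, X)) (fun v X => y (v, X))
     SA SB true|%:R.

Lemma adopters_A_mono L (x y x' y' : V * bool -> bool) :
  (forall i, x i -> x' i) -> (forall i, y i -> y' i) -> adopters_A L x y <= adopters_A L x' y'.
Proof.
move=> xx' yy'; rewrite ler_nat; apply/subset_leq_card/lfp_adopt_mono => v Y.
- exact: xx'.
- exact: yy'.
Qed.

Lemma final_A_lfp (Q : GAP R) L Rg Pi Tau : (forall X, Q X false <= Q X true) ->
  [set v | is_adopted (nst (final E Q SA SB (L, Rg, Pi, Tau) v) itemA)] =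
  lfp_adopt (live_edge E (fun e => L e)) (fun v X => below_lo Rg (v, X))
    (fun v X => below_hi (gap_lo Q) (gap_hi Q) Rg (v, X)) SA SB true.
Proof.
move=> Qplus_ge; transitivity (final_adopters E (fun e => L e) (fun v => Pi v) Q
  (fun v X => Rg (v, X)) SA SB (fun v => Tau v) itemA); first by [].
rewrite -lfp_adopt_final //; apply: eq_lfp_adopt => v X //.
by rewrite /alone /accept_alone alpha_le_alone.
Qed.

Lemma sum_omega (T : nmodType) (f : omega V -> T) :
  \sum_(w : omega V) f w =
  \sum_L \sum_Rg \sum_Pi \sum_Tau f (L, Rg, Pi, Tau).
Proof. by rewrite !pair_big /=; apply: eq_bigr => -[[[L Rg] Pi] Tau]. Qed.

Lemma sigmaAE (Q : GAP R) : (forall X, Q X false <= Q X true) ->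
  sigmaA E p Q SA SB =
  \sum_L \sum_(Pi : {ffun V -> {perm V}}) \sum_(Tau : {ffun V -> bool})
    choice_weight * edge_weight L *
    threshold_mean (adopters_A L) (gap_lo Q) (gap_hi Q).
Proof.
move=> Qplus_ge; rewrite /sigmaA sum_omega; apply: eq_bigr => L _.
rewrite exchange_big; apply: eq_bigr => Pi _; rewrite exchange_big; apply: eq_bigr => Tau _.
rewrite /threshold_mean mulr_sumr; apply: eq_bigr => Rg _.
rewrite final_A_lfp // /weight /adopters_A /choice_weight /edge_weight.
have -> : \prod_(x : V * bool) region_w Q x.2 (Rg x) =
          \prod_i interval_weight (gap_lo Q i) (gap_hi Q i) (Rg i) by [].
ring.
Qed.

Lemma choice_weight_ge0 : 0 <= choice_weight.
Proof. by apply: mulr_ge0; apply: prodr_ge0 => v _; rewrite invr_ge0 ler0n. Qed.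

Lemma edge_weight_ge0 L : (forall u v, E u v -> 0 <= p u v <= 1) -> 0 <= edge_weight L.
Proof.
move=> p01; apply: prodr_ge0 => e _; case Ee: (E e.1 e.2); case: (L e) => //.
  by case/andP: (p01 _ _ Ee).
by case/andP: (p01 _ _ Ee) => _; rewrite subr_ge0.
Qed.

Lemma ordered_gap (Q : GAP R) : GAP_in01 Q -> Qplus Q ->
  ordered_thresholds (gap_lo Q) (gap_hi Q).
Proof.
move=> Q01 [leA leB] [v X]; rewrite /gap_lo /gap_hi /=.
have /andP[-> _] := Q01 X false; have /andP[_ ->] := Q01 X true.
by split=> //; case: X.
Qed.
End Expectation.

Lemma Qplus_le (R : realFieldType) (Q : GAP R) : Qplus Q -> forall X, Q X false <= Q X true.
Proof. by case=> leA leB []. Qed.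

Theorem theorem10 (R : realFieldType) (V : finType) (E : rel V) (p : V -> V -> R)
  (hp : forall u v, E u v -> 0 <= p u v <= 1) (SA SB : {set V})
  (Q Q' : GAP R) (hQ : GAP_in01 Q) (hQ' : GAP_in01 Q')
  (hQp : Qplus Q) (hQp' : Qplus Q') (X c : bool)
  (hother : forall Y d, (Y, d) != (X, c) -> Q' Y d = Q Y d)
  (hle : Q X c <= Q' X c) :
  sigmaA E p Q SA SB <= sigmaA E p Q' SA SB.
Proof.
have QQ' Y d : Q Y d <= Q' Y d.
  by have [[-> ->] //|/hother ->] := eqVneq (Y, d) (X, c).
rewrite !sigmaAE; [|exact: Qplus_le..].
apply: ler_sum => L _; apply: ler_sum => Pi _; apply: ler_sum => Tau _.
apply: ler_wpM2l; first by rewrite mulr_ge0 ?choice_weight_ge0 ?edge_weight_ge0.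
apply: threshold_mean_mono; first exact: adopters_A_mono.
- exact: ordered_gap.
- exact: ordered_gap.
- by move=> i; rewrite /gap_lo QQ'.
- by move=> i; rewrite /gap_hi QQ'.
Qed.
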